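(* Let $a$ be a primitive element of $GF(2^m)$, $n\le 2^m-1$, $1\le k\le d\le n-1$, $g(x)=\prod_{j=1}^{n-k}(x-a^j)=\sum_{i=0}^{n-k}g_ix^i$ and $f(x)=\prod_{j=1}^{n-d}(x-a^j)=\sum_{i=0}^{n-d}f_ix^i$. Let $G_k$ be the $k\times n$ matrix whose $r$-th row ($r=1,\dots,k$) is $(0,\dots,0,g_0,\dots,g_{n-k},0,\dots,0)$ with $r-1$ leading zeros, $B$ the $(d-k)\times n$ matrix whose $r$-th row ($r=1,\dots,d-k$) is $(0,\dots,0,f_0,\dots,f_{n-d},0,\dots,0)$ with $r-1$ leading zeros, and $G=\begin{bmatrix}G_k\\ B\end{bmatrix}$. Then $G$ is a least-update-complexity matrix.
   Context: The update complexity of a matrix is the maximum, over its rows, of the number of nonzero entries in the row. Here ''least-update-complexity'' refers to matrices of the form $\begin{bmatrix}G_k'\\ B'\end{bmatrix}$ that are generator matrices of the $[n,d]$ Reed–Solomon code generated by $f(x)$ and whose first $k$ rows $G_k'$ form a generator matrix of the $[n,k]$ Reed–Solomon code generated by $g(x)$ (the form required for the minimum-bandwidth regenerating code); $G$ has the minimum update complexity among all such matrices. A Reed–Solomon code generated by $h(x)$ is the set of vectors in $GF(2^m)^n$ whose polynomial $\sum_i c_ix^i$ is divisible by $h(x)$. *)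

From mathcomp Require Import all_boot all_order all_algebra.
Set Implicit Arguments. Unset Strict Implicit. Unset Printing Implicit Defensive.
Import GRing.Theory.
Local Open Scope ring_scope.

Definition poly_of_vec (F : fieldType) (n : nat) (c : 'rV[F]_n) : {poly F} :=
  \sum_(i < n) c 0 i *: 'X^i.

Definition RS_code (F : fieldType) (n : nat) (h : {poly F}) (c : 'rV[F]_n) : bool :=
  h %| poly_of_vec c.

Definition is_generator_matrix (F : fieldType) (r n : nat) (M : 'M[F]_(r, n))
  (C : 'rV[F]_n -> bool) : Prop :=
  row_free M /\ forall c : 'rV[F]_n, (c <= M)%MS = C c.

Definition update_complexity (F : fieldType) (r n : nat) (M : 'M[F]_(r, n)) : nat :=
  \max_(i < r) #|[pred j : 'I_n | M i j != 0%R]|.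

Definition admissible (F : fieldType) (n k d : nat) (g f : {poly F})
  (Gk' : 'M[F]_(k, n)) (B' : 'M[F]_(d - k, n)) : Prop :=
  is_generator_matrix (col_mx Gk' B') (RS_code f) /\
  is_generator_matrix Gk' (RS_code g).

Definition least_update_complexity (F : fieldType) (n k d : nat) (g f : {poly F})
  (Gk : 'M[F]_(k, n)) (B : 'M[F]_(d - k, n)) : Prop :=
  admissible g f Gk B /\
  forall (Gk' : 'M[F]_(k, n)) (B' : 'M[F]_(d - k, n)),
    admissible g f Gk' B' ->
    (update_complexity (col_mx Gk B) <= update_complexity (col_mx Gk' B'))%N.

Definition shift_mx (F : fieldType) (r n : nat) (p : {poly F}) : 'M[F]_(r, n) :=
  \matrix_(i < r, j < n) (if (i <= j)%N then p`_(j - i) else 0%R).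

(* The code generated by g = prod_(1 <= j <= n-k) (X - a^j) has designed distance
   n-k+1: by the BCH bound every nonzero codeword has weight at least n-k+1.  The
   first row of any admissible G_k' is such a codeword, so every admissible
   matrix has update complexity at least n-k+1, while every row of G is a shift
   of g or of f and has weight at most deg g + 1 = n-k+1.  G itself is admissible
   because g = f h with deg h = d-k, and Euclidean division by h writes any
   multiple q f with deg q < d as (q %/ h) g + (q %% h) f. *)

From mathcomp Require Import all_boot all_order all_algebra.
From mathcomp Require Import zify ring.
Set Implicit Arguments. Unset Strict Implicit. Unset Printing Implicit Defensive.
Import GRing.Theory.
Local Open Scope ring_scope.

Section ShiftMatrix.
Variable F : fieldType.
Implicit Types p : {poly F}.

Lemma poly_of_vecE n (c : 'rV[F]_n) : poly_of_vec c = rVpoly c.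
Proof. by rewrite /rVpoly poly_def; apply: eq_bigr => i _; rewrite valK. Qed.

Lemma shift_mxE r n p : shift_mx r n p = lin1_mx (poly_rV \o p \o* rVpoly).
Proof.
apply/matrixP => i j; rewrite !mxE /= rVpoly_delta coefXnM ltnNge.
by case: (i <= j)%N.
Qed.

Lemma rVpoly_mul_shift_mx r n p (x : 'rV[F]_r) :
  (r + size p <= n.+1)%N -> rVpoly (x *m shift_mx r n p) = rVpoly x * p.
Proof.
move=> le_rp_n; rewrite shift_mxE mul_rV_lin1 /= poly_rV_K //.
have le_x_r : (size (rVpoly x) <= r)%N := size_poly _ _.
by apply: leq_trans (size_polyMleq _ _) _; lia.
Qed.

Definition weight n (v : 'rV[F]_n) : nat := #|[pred j | v 0 j != 0]|.

Lemma update_complexityE r n (M : 'M[F]_(r, n)) :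
  update_complexity M = \max_(i < r) weight (row i M).
Proof. by apply: eq_bigr => i _; apply: eq_card => j; rewrite !inE mxE. Qed.

Lemma weight_row_le_update_complexity r n (M : 'M[F]_(r, n)) i :
  (weight (row i M) <= update_complexity M)%N.
Proof. by rewrite update_complexityE; apply: leq_bigmax. Qed.

Lemma update_complexity_col_mx r1 r2 n (A : 'M[F]_(r1, n)) (B : 'M[F]_(r2, n)) :
  update_complexity (col_mx A B) = maxn (update_complexity A) (update_complexity B).
Proof.
rewrite /update_complexity big_split_ord /=.
by congr maxn; apply: eq_bigr => i _; apply: eq_card => j;
  rewrite !inE (col_mxEu, col_mxEd).
Qed.

Lemma update_complexity_shift_mx r n p :
  (update_complexity (shift_mx r n p) <= size p)%N.
Proof.
apply/bigmax_leqP => i _; case: n => [|n].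
  by rewrite (leq_trans (max_card _)) ?card_ord.
pose support := [set (inord (i + t) : 'I_n.+1) | t : 'I_(size p)].
apply: leq_trans (_ : #|support| <= _)%N; last first.
  by rewrite (leq_trans (leq_imset_card _ _)) // card_ord.
apply/subset_leq_card/subsetP => j; rewrite inE mxE.
case: leqP => [le_ij nz_coef|]; last by rewrite eqxx.
have lt_ji_p : (j - i < size p)%N.
  by rewrite ltnNge; apply: contra nz_coef => /(nth_default 0) ->.
by apply/imsetP; exists (Ordinal lt_ji_p); rewrite //= subnKC // inord_val.
Qed.

End ShiftMatrix.

Section Generators.
Variable F : fieldType.
Implicit Types p q f h : {poly F}.

Lemma rVpoly_eq0 n (u : 'rV[F]_n) : (rVpoly u == 0) = (u == 0).
Proof.
apply/eqP/eqP => [u0|->]; last exact: linear0.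
by rewrite -(rVpolyK u) u0 linear0.
Qed.

Lemma generator_mx_RS_code r n p (M : 'M[F]_(r, n)) :
  (forall x, rVpoly (x *m M) = 0 -> x = 0) ->
  (forall x, p %| rVpoly (x *m M)) ->
  (forall q, (size (q * p)%R <= n)%N -> exists x, rVpoly (x *m M) = q * p) ->
  is_generator_matrix M (RS_code p).
Proof.
move=> M_inj dvd_p onto_mul; split.
  by apply: inj_row_free => x /(congr1 rVpoly); rewrite linear0; apply: M_inj.
move=> c; rewrite /RS_code poly_of_vecE; apply/idP/idP.
  by case/submxP => x ->.
case/dvdpP => q def_c; have [|x def_xM] := onto_mul q.
  by rewrite -def_c size_poly.
by apply/submxP; exists x; apply: (can_inj rVpolyK); rewrite def_xM def_c.
Qed.

Lemma size_cofactor_le r n p q :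
  p != 0 -> (r + size p = n.+1)%N -> (size (q * p)%R <= n)%N -> (size q <= r)%N.
Proof.
have [->|nz_q] := eqVneq q 0; first by rewrite size_poly0.
move=> nz_p size_rp; rewrite size_mul // -ltnS prednK; last first.
  by rewrite addn_gt0 size_poly_gt0 nz_q.
by rewrite -size_rp leq_add2r.
Qed.

Lemma shift_mx_generator r n p :
  p != 0 -> (r + size p = n.+1)%N -> is_generator_matrix (shift_mx r n p) (RS_code p).
Proof.
move=> nz_p size_rp; have le_rp : (r + size p <= n.+1)%N by rewrite size_rp.
apply: generator_mx_RS_code => [x|x|q le_qp_n]; rewrite ?rVpoly_mul_shift_mx //.
- by move/eqP; rewrite mulf_eq0 (negbTE nz_p) orbF rVpoly_eq0 => /eqP.
- exact: dvdp_mull.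
exists (poly_rV q).
by rewrite rVpoly_mul_shift_mx // poly_rV_K // (size_cofactor_le nz_p size_rp).
Qed.

Lemma col_shift_mx_generator r1 r2 n f h :
    f != 0 -> size h = r2.+1 -> (r1 + size (f * h)%R = n.+1)%N ->
  is_generator_matrix (col_mx (shift_mx r1 n (f * h)) (shift_mx r2 n f)) (RS_code f).
Proof.
move=> nz_f size_h size_r1fh; set M := col_mx _ _.
have nz_h : h != 0 by rewrite -size_poly_gt0 size_h.
have size_fh : size (f * h) = (size f + r2)%N by rewrite size_mul // size_h addnS.
have le_r1fh : (r1 + size (f * h)%R <= n.+1)%N by rewrite size_r1fh.
have le_r2f : (r2 + size f <= n.+1)%N by lia.
have rVpoly_xM x :
    rVpoly (x *m M) = (rVpoly (lsubmx x) * h + rVpoly (rsubmx x)) * f.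
  rewrite -{1}(hsubmxK x) mul_row_col linearD /= !rVpoly_mul_shift_mx //.
  by rewrite mulrDl mulrA mulrAC.
apply: generator_mx_RS_code => [x|x|q le_qf_n]; rewrite ?rVpoly_xM.
- move/eqP; rewrite mulf_eq0 (negbTE nz_f) orbF => /eqP comb0.
  have small : (size (rVpoly (rsubmx x)) < size h)%N by rewrite size_h ltnS size_poly.
  have /eqP := divp_addl_mul_small (rVpoly (lsubmx x)) small.
  have /eqP := modp_addl_mul_small (rVpoly (lsubmx x)) small.
  rewrite comb0 div0p mod0p !(eq_sym 0) !rVpoly_eq0 => /eqP r0 /eqP l0.
  by rewrite -(hsubmxK x) l0 r0 row_mx0.
- exact: dvdp_mull.
have le_q : (size q <= r1 + r2)%N.
  by apply: (size_cofactor_le nz_f) le_qf_n; rewrite -size_r1fh size_fh addnA addnAC.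
exists (row_mx (poly_rV (q %/ h)) (poly_rV (q %% h))).
rewrite rVpoly_xM row_mxKl row_mxKr !poly_rV_K -?divp_eq //.
  by rewrite -ltnS -size_h ltn_modp.
by rewrite size_divp // size_h /= leq_subLR addnC.
Qed.

End Generators.

Section BCHBound.
Variable F : fieldType.

Lemma horner_rVpoly n (v : 'rV[F]_n) x : (rVpoly v).[x] = \sum_(i < n) v 0 i * x ^+ i.
Proof.
rewrite -poly_of_vecE horner_sum; apply: eq_bigr => i _.
by rewrite hornerZ hornerXn.
Qed.

Lemma sum_horner_exp_eq0 n w (a : F) (v : 'rV[F]_n) (q : {poly F}) :
    (forall j, (0 < j <= w)%N -> (rVpoly v).[a ^+ j] = 0) -> (size q <= w)%N ->
  \sum_(i < n) v 0 i * a ^+ i * q.[a ^+ i] = 0.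
Proof.
move=> roots_v le_q_w; under eq_bigr do rewrite horner_coef mulr_sumr.
rewrite exchange_big big1 // => l _ /=.
have -> : \sum_(i < n) v 0 i * a ^+ i * (q`_l * a ^+ i ^+ l) =
          q`_l * (rVpoly v).[a ^+ l.+1].
  rewrite horner_rVpoly mulr_sumr; apply: eq_bigr => i _.
  by rewrite -!exprM mulSn exprD [(l * i)%N]mulnC; ring.
by rewrite roots_v ?mulr0 // (leq_trans (ltn_ord l)).
Qed.

Lemma size_prod_XsubC_pred (T : finType) (P : pred T) (c : T -> F) :
  size (\prod_(s | P s) ('X - (c s)%:P)) = #|P|.+1.
Proof. by rewrite -big_filter size_prod_XsubC cardE [index_enum T]unlock. Qed.

Lemma bch_bound N n w (a : F) (v : 'rV[F]_n) :
    N.-primitive_root a -> (n <= N)%N -> v != 0 ->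
    (forall j, (0 < j <= w)%N -> (rVpoly v).[a ^+ j] = 0) ->
  (w < weight v)%N.
Proof.
move=> prim_a le_nN nz_v roots_v; rewrite ltnNge; apply/negP => le_wt_w.
have [i0 nz_vi0] : exists i0, v 0 i0 != 0.
  apply/existsP; apply: contraR nz_v => /existsPn v0.
  by apply/eqP/rowP => j; rewrite mxE; apply/eqP/negbNE/v0.
have eq_exp (i j : 'I_n) : (a ^+ i == a ^+ j) = (i == j).
  by rewrite (eq_prim_root_expr prim_a) !modn_small ?(leq_trans _ le_nN).
have nz_a : a != 0.
  apply/eqP => a0; have := prim_expr_order prim_a.
  rewrite a0 expr0n (gtn_eqF (prim_order_gt0 prim_a)) => /eqP.
  by rewrite eq_sym oner_eq0.
(* q vanishes at a^s for every s in the support except i0, so the sum below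
   reduces to its nonzero i0-th term. *)
pose P := [pred s | (s != i0) && (v 0 s != 0)].
pose q := \prod_(s | P s) ('X - (a ^+ s)%:P).
have weight_v : weight v = #|P|.+1 by rewrite /weight (cardD1 i0) inE nz_vi0.
have := sum_horner_exp_eq0 (q := q) roots_v.
rewrite size_prod_XsubC_pred -weight_v => /(_ le_wt_w) /eqP.
apply/negP; rewrite (bigD1 i0) //= big1 ?addr0.
  rewrite !mulf_neq0 ?expf_neq0 // horner_prod; apply/prodf_neq0 => s /andP[ne_s _].
  by rewrite hornerXsubC subr_eq0 eq_exp eq_sym.
move=> i ne_i; have [->|nz_vi] := eqVneq (v 0 i) 0; first by rewrite !mul0r.
by rewrite horner_prod (bigD1 i) /= ?ne_i ?nz_vi // hornerXsubC subrr mul0r mulr0.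
Qed.

End BCHBound.

Lemma row_free_row_neq0 (F : fieldType) m n (M : 'M[F]_(m, n)) i :
  row_free M -> row i M != 0.
Proof.
move=> free_M; apply/eqP => row_i0.
have := rowE i M; rewrite row_i0 -(mul0mx 1 M).
move/esym/(row_free_inj free_M)/matrixP/(_ 0 i); rewrite !mxE !eqxx /=.
by apply/eqP; rewrite oner_eq0.
Qed.

Lemma size_prod_nat_XsubC (R : nzRingType) b e (c : nat -> R) :
  size (\prod_(b <= j < e) ('X - (c j)%:P)) = (e - b).+1.
Proof. by rewrite size_prod_XsubC size_iota. Qed.

Lemma root_prod_nat_XsubC (R : idomainType) b e j (c : nat -> R) :
  (b <= j < e)%N -> root (\prod_(b <= i < e) ('X - (c i)%:P)) (c j).
Proof.
move=> j_in; rewrite /root horner_prod prodf_seq_eq0.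
by apply/hasP; exists j; rewrite ?mem_index_iota //= hornerXsubC subrr.
Qed.

Theorem corollary4 (F : finFieldType) (m : nat) (a : F) (n k d : nat) :
  #|F| = (2 ^ m)%N ->
  (#|F|.-1).-primitive_root a ->
  (n <= 2 ^ m - 1)%N ->
  (1 <= k)%N -> (k <= d)%N -> (d <= n - 1)%N ->
  let g := \prod_(1 <= j < (n - k).+1) ('X - (a ^+ j)%:P) in
  let f := \prod_(1 <= j < (n - d).+1) ('X - (a ^+ j)%:P) in
  least_update_complexity g f (shift_mx k n g) (shift_mx (d - k) n f).
Proof.
move=> card_F prim_a le_n_2m k_gt0 le_kd le_dn g f.
have le_n_order : (n <= #|F|.-1)%N by rewrite card_F -subn1.
pose h := \prod_((n - d).+1 <= j < (n - k).+1) ('X - (a ^+ j)%:P).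
have g_fh : g = f * h by rewrite -big_cat_nat //; lia.
have size_f : size f = (n - d).+1 by rewrite size_prod_nat_XsubC subn1.
have size_g : size g = (n - k).+1 by rewrite size_prod_nat_XsubC subn1.
have size_h : size h = (d - k).+1 by rewrite size_prod_nat_XsubC; lia.
have nz_f : f != 0 by rewrite -size_poly_gt0 size_f.
have nz_g : g != 0 by rewrite -size_poly_gt0 size_g.
have size_kg : (k + size g = n.+1)%N by rewrite size_g; lia.
split=> [|Gk' B' [_ [free_Gk' code_Gk']]].
  split; last exact: shift_mx_generator.
  by rewrite g_fh; apply: col_shift_mx_generator; rewrite // -g_fh.
pose i0 : 'I_k := Ordinal k_gt0.
have upper : (update_complexity (col_mx (shift_mx k n g) (shift_mx (d - k) n f))
              <= size g)%N.
  rewrite update_complexity_col_mx geq_max update_complexity_shift_mx.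
  by rewrite (leq_trans (update_complexity_shift_mx _ _ _)) // size_f size_g; lia.
have lower : (size g <= weight (row i0 Gk'))%N.
  rewrite size_g; apply: (bch_bound prim_a le_n_order (row_free_row_neq0 _ free_Gk')).
  move=> j /andP[j_gt0 le_j]; apply/eqP; apply: (root_dvdp (p := g)).
    by have := row_sub i0 Gk'; rewrite code_Gk' /RS_code poly_of_vecE.
  by apply: root_prod_nat_XsubC; rewrite j_gt0 ltnS.
rewrite (leq_trans upper) // (leq_trans lower) // update_complexity_col_mx.
by rewrite leq_max weight_row_le_update_complexity.
Qed.
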